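(* Let $p$ be an odd prime, $s\ge1$, and $r\ge3$ an integer dividing $\frac{p^s\pm1}2$ (fixed sign). Let $\omega=\eta\sum_{i=0}^{r-2}\Delta_iS_i$, viewed as an $R_r$-linear combination of colored cores in the solid torus $S^1\times D^2$, and let $\tilde\omega=\sum_{i=0}^{r-2}(\eta\Delta_i)^{p^s}\tilde S_i$ be its lift to the $p^s$-fold cyclic cover $\tilde{S^1}\times D^2$. Then, in $V(\tilde{S^1}\times S^1)$, $$\tilde\omega\equiv\mp\left(\frac{-2r}{p}\right)^{s}\eta\sum_{i=0}^{r-2}\Delta_i\tilde S_i\pmod p,$$ where $\mp$ is opposite to the sign in the hypothesis.
   Context: $\lambda=e^{2\pi i/(2r)}$; $\Delta_0=1$, $\Delta_1=-\lambda-\lambda^{-1}$, $\Delta_{i+1}=\Delta_1\Delta_i-\Delta_{i-1}$; $\eta=-i(\lambda-\lambda^{-1})/\sqrt{2r}$. $S_i$ denotes the core of $S^1\times D^2$ with standard thickening colored $i$, and $\tilde S_i$ the core of $\tilde{S^1}\times D^2$ (where $\tilde{S^1}\to S^1$ is the $p^s$-fold cover) colored $i$; these are regarded as elements $[S_i]$, $[\tilde S_i]$ of the modules $V(S^1\times S^1)$, $V(\tilde{S^1}\times S^1)$ of the Blanchet–Habegger–Masbaum–Vogel $SU(2)$ TQFT (with $p=2r$ in their notation) with coefficients in $R_r=\mathbb Z[\tfrac1{2r},\xi_t]$ ($t=4r$ if $r$ even, $8r$ if odd) via $A\mapsto-e^{2\pi i/4r}$. $\left(\frac{-2r}{p}\right)$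 is the Legendre symbol; congruence is modulo $p$ times the module. *)

From HB Require Import structures.
From mathcomp Require Import all_boot all_order all_algebra.
From mathcomp Require Import algC.
Set Implicit Arguments. Unset Strict Implicit. Unset Printing Implicit Defensive.
Import Order.TTheory GRing.Theory Num.Theory.
Local Open Scope ring_scope.

(* e^{2 pi i / m} for m even: (m/2).-root (-1) is the root of -1 of minimal
   nonnegative argument, i.e. e^{i pi / (m/2)}. *)
Definition lambda (r : nat) : algC := r.-root (-1).   (* e^{2 pi i/(2r)} *)

(* t = 4r if r even, 8r if r odd; xi_t = e^{2 pi i/t} *)
Definition tt (r : nat) : nat := if odd r then 8 * r else 4 * r.
Definition xi (r : nat) : algC := ((tt r)./2).-root (-1).

Fixpoint Delta_pair (r : nat) (i : nat) : algC * algC :=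
  match i with
  | 0 => (1, - lambda r - (lambda r)^-1)
  | i'.+1 => let (a, b) := Delta_pair r i' in
             (b, (- lambda r - (lambda r)^-1) * b - a)
  end.
Definition Delta (r i : nat) : algC := (Delta_pair r i).1.

Definition eta (r : nat) : algC :=
  - 'i * (lambda r - (lambda r)^-1) / sqrtC ((2 * r)%:R).

(* membership in R_r = Z[1/(2r), xi_t] *)
Definition in_Rr (r : nat) (x : algC) : Prop :=
  exists (k : nat) (q : {poly int}),
    x * ((2 * r)%:R) ^+ k = (map_poly intr q).[xi r].

Definition congr_Rr (r p : nat) (x y : algC) : Prop :=
  exists z, in_Rr r z /\ x - y = p%:R * z.

(* V(S^1 x S^1) (and V(tilde S^1 x S^1)) for p = 2r is the free R_r-module
   with basis the cores colored 0 .. r-2 (BHMV).  An element is represented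
   by its coefficient vector in this basis. *)
Definition Vvec (r : nat) := {ffun 'I_(r.-1) -> algC}.

Definition in_V (r : nat) (v : Vvec r) : Prop := forall i, in_Rr r (v i).

Definition congr_V (r p : nat) (u v : Vvec r) : Prop :=
  exists w : Vvec r, @in_V r w /\ forall i, u i - v i = p%:R * w i.

Definition omega_tilde (r p s : nat) : Vvec r :=
  [ffun i : 'I_(r.-1) => (eta r * Delta r i) ^+ (p ^ s)].

Definition eta_Delta_vec (r : nat) (c : algC) : Vvec r :=
  [ffun i : 'I_(r.-1) => c * eta r * Delta r i].

Definition legendre (a : int) (p : nat) : int :=
  if (p%:Z %| a)%Z then 0
  else if [exists x : 'I_p, (p%:Z %| (x%:Z) ^+ 2 - a)%Z] then 1 else -1.

(* Raising to the power N = p^s is additive modulo p in R_r (Frobenius).  Since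
   2r divides N -+ 1, lambda^N = lambda^(-+1), so Delta_1 = -lambda - lambda^-1,
   and hence every Delta_i (an integer polynomial in Delta_1), is fixed modulo p,
   while lambda - lambda^-1 only changes sign.  Writing N = 2h + 1, the factors
   -i and 1/sqrt(2r) of eta contribute (-2r)^-h to eta^N, and Euler's criterion
   identifies (-2r)^h with the Legendre symbol (-2r/p)^s modulo p.  These
   congruences take place in R_r because lambda, i and sqrt(2r) lie there: xi_t
   is a primitive t-th root of unity, and r is the square of a product of
   cyclotomic units. *)

From mathcomp Require Import all_boot all_order all_algebra all_solvable all_field.
From mathcomp Require Import ring lra zify.
Set Implicit Arguments. Unset Strict Implicit. Unset Printing Implicit Defensive.
Import Order.TTheory GRing.Theory Num.Theory.
Local Open Scope ring_scope.

Lemma rotation_increases_abscissa (R : realFieldType) (x v c s : R) :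
  c ^+ 2 + s ^+ 2 = 1 -> x ^+ 2 + v ^+ 2 = 1 -> 0 <= v -> 0 <= s ->
  x < c -> c != 1 -> x < x * (c ^+ 2 - s ^+ 2) + 2 * c * s * v.
Proof.
move=> cs1 xv1 v_ge0 s_ge0 ltxc c_neq1.
have s_gt0 : 0 < s.
  rewrite lt_neqAle s_ge0 andbT eq_sym; apply: contra c_neq1 => /eqP s0.
  move: cs1; rewrite s0 expr0n addr0 => /eqP; rewrite sqrf_eq1 => /orP[// | /eqP c_1].
  by move: ltxc; rewrite c_1; nra.
suff : x * s < c * v by nra.
have [c_ge0 | c_lt0] := lerP 0 c.
- have [x_ge0 | x_lt0] := lerP 0 x; last by nra.
  have ltsv : s < v by nra.
  nra.
- have ltvs : v < s by nra.
  nra.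
Qed.

Lemma norm_unity_root (z : algC) n : (0 < n)%N -> z ^+ n = 1 -> `|z| = 1.
Proof.
move=> n_gt0 zn; have : `|z| ^+ n = 1 by rewrite -normrX zn normr1.
by move/eqP; rewrite pexpr_eq1 // => /eqP.
Qed.

Lemma unit_circle_Re_inj (z w : algC) : `|z| = 1 -> `|w| = 1 ->
  'Re z = 'Re w -> 0 <= 'Im z -> 0 <= 'Im w -> z = w.
Proof.
move=> z1 w1 eqRe Imz_ge0 Imw_ge0.
have : 'Im z ^+ 2 = 'Im w ^+ 2.
  by apply: (addrI ('Re z ^+ 2)); rewrite -normC2_Re_Im eqRe -normC2_Re_Im z1 w1.
by move/eqP; rewrite eqrXn2 // => /eqP eqIm; rewrite [z]Crect [w]Crect eqRe eqIm.
Qed.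

(* Multiplying [u] by [y^-2] rotates it by twice the angle of [y] towards the real axis. *)
Lemma Re_mul_unit_circle_gt (u y : algC) : `|u| = 1 -> `|y| = 1 ->
  0 <= 'Im u -> 0 <= 'Im y -> 'Re u < 'Re y -> y != 1 -> 'Re u < 'Re (u * y ^- 2).
Proof.
move=> u1 y1 Imu_ge0 Imy_ge0 ltRe y_neq1.
have -> : 'Re (u * y ^- 2) = 'Re u * ('Re y ^+ 2 - 'Im y ^+ 2) + 2 * 'Re y * 'Im y * 'Im u.
  rewrite -exprVn.
  have -> : y^-1 = y^* by rewrite invC_norm y1 expr1n invr1 mul1r.
  rewrite ReM !expr2 ReM ImM Re_conj Im_conj; ring.
have normRI (z : algC) : `|z| = 1 -> 'Re z ^+ 2 + 'Im z ^+ 2 = 1.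
  by move=> z1; rewrite -normC2_Re_Im z1 expr1n.
have y_Re_neq1 : 'Re y != 1.
  apply: contra y_neq1 => /eqP Rey1; apply/eqP/unit_circle_Re_inj; rewrite ?normr1 //.
  - by rewrite Rey1 (Creal_ReP _ (rpred1 _)).
  - by rewrite (Creal_ImP _ (rpred1 _)).
have := @rotation_increases_abscissa _ (in_algR (Creal_Re u)) (in_algR (Creal_Im u))
  (in_algR (Creal_Re y)) (in_algR (Creal_Im y)).
have algR_eq (a b : algR) : a = b <-> algRval a = algRval b.
  by split=> [-> // | eq_ab]; apply: val_inj.
rewrite !algR_eq /= -!expr2; apply; rewrite ?normRI //.
Qed.

Lemma unity_root_Re_max n (P : pred algC) : (0 < n)%N ->
    (exists2 x, x ^+ n = 1 & P x) ->
  exists u, [/\ u ^+ n = 1, P u & forall v, v ^+ n = 1 -> P v -> 'Re v <= 'Re u].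
Proof.
move=> n_gt0 [x xn Px]; have [w w_prim] := C_prim_root_exists n_gt0.
have [i0 x_def] := prim_rootP w_prim xn.
pose ReR (k : 'I_n) := in_algR (Creal_Re (w ^+ k)).
case: (@arg_maxP _ _ _ i0 (fun k => P (w ^+ k)) ReR); first by rewrite -x_def.
move=> k Pk k_max; exists (w ^+ k); split=> [|//|v vn Pv].
  by rewrite exprAC (prim_expr_order w_prim) expr1n.
have [j v_def] := prim_rootP w_prim vn.
by rewrite v_def; apply: (k_max j); rewrite -v_def.
Qed.

Lemma Im_rootCN1_ge0 n : 0 <= 'Im (n.-root (-1) : algC).
Proof.
case: n => [|[|n]]; last exact: Im_rootC_ge0.
  by rewrite root0C (Creal_ImP _ (rpred0 _)).
by rewrite root1C (Creal_ImP _ (rpredN1 _)).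
Qed.

(* [n.-root (-1)] has the largest real part among the n-th roots of [-1] with
   [Im >= 0]; an element of [P] of maximal real part, taken with [Im >= 0], would
   be rotated by [n.-root (-1) ^- 2] to one with a larger real part. *)
Lemma rootCN1_rotation_closed n (P : pred algC) : (0 < n)%N ->
    (forall x, P x -> P x^*) -> (forall x, P x -> P (x * n.-root (-1) ^- 2)) ->
    ~~ P (n.-root (-1)) ->
  forall x, x ^+ n = -1 -> ~~ P x.
Proof.
move=> n_gt0 P_conj P_rot Py x xn; apply/negP => Px; set y := n.-root (-1) in P_rot Py.
have yn : y ^+ n = -1 := rootCK n_gt0 (-1).
have n2_gt0 : (0 < n * 2)%N by rewrite muln_gt0 n_gt0.
have root2n (v : algC) : v ^+ n = -1 -> v ^+ (n * 2) = 1.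
  by move=> vn; rewrite exprM vn sqrrN expr1n.
pose Q (v : algC) := (v ^+ n == -1) && P v.
have [u [_ /andP[/eqP un Pu] u_max]] := @unity_root_Re_max _ Q n2_gt0
  (ex_intro2 _ _ x (root2n x xn) (introT andP (conj (introT eqP xn) Px))).
have [z [zn Pz Imz_ge0 z_max]] : exists z, [/\ z ^+ n = -1, P z, 0 <= 'Im z &
    forall v, v ^+ n = -1 -> P v -> 'Re v <= 'Re z].
  have Qmax v : v ^+ n = -1 -> P v -> 'Re v <= 'Re u.
    by move=> vn Pv; apply: u_max (root2n v vn) _; rewrite /Q vn eqxx.
  have [Imu_ge0 | Imu_lt0] := real_leP (real0 _) (Creal_Im u); first by exists u.
  exists u^*; rewrite -rmorphXn /= un conjCN1 Im_conj oppr_ge0 ltW // Re_conj.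
  by split=> //; apply: P_conj.
have y1 : `|y| = 1 := norm_unity_root n2_gt0 (root2n y yn).
have z1 : `|z| = 1 := norm_unity_root n2_gt0 (root2n z zn).
have ltRe : 'Re z < 'Re y.
  rewrite lt_neqAle rootC_Re_max // andbT; apply: contraNneq Py => eqRe.
  by rewrite -(unit_circle_Re_inj z1 y1 eqRe Imz_ge0 (Im_rootCN1_ge0 n)).
have y_neq1 : y != 1.
  apply/eqP => y_eq1; move: yn; rewrite y_eq1 expr1n => /eqP.
  by rewrite -addr_eq0 (eqr_nat _ 2 0).
have vn : (z * y ^- 2) ^+ n = -1.
  by rewrite exprMn zn exprVn exprAC yn sqrrN expr1n invr1 mulr1.
have := Re_mul_unit_circle_gt z1 y1 Imz_ge0 (Im_rootCN1_ge0 n) ltRe y_neq1.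
by move/lt_le_trans/(_ (z_max _ vn (P_rot _ Pz))); rewrite ltxx.
Qed.

Lemma prim_rootCN1 n : (0 < n)%N -> (n * 2).-primitive_root (n.-root (-1) : algC).
Proof.
move=> n_gt0; set y := n.-root (-1).
have n2_gt0 : (0 < n * 2)%N by rewrite muln_gt0 n_gt0.
have y2n : y ^+ (n * 2) = 1 by rewrite exprM rootCK // sqrrN expr1n.
have [m y_prim m_dvd] := prim_order_exists n2_gt0 y2n.
have [w w_prim] := C_prim_root_exists n2_gt0.
suff /eqP : w ^+ m = 1.
  rewrite -(prim_order_dvd w_prim) => n2_dvd.
  by have /eqP -> : (n * 2 == m)%N by rewrite eqn_dvd n2_dvd m_dvd.
have wn : w ^+ n = -1.
  have /eqP := prim_expr_order w_prim.
  rewrite exprM sqrf_eq1 -(prim_order_dvd w_prim) => /orP[|/eqP //].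
  by move/(dvdn_leq n_gt0); lia.
apply/eqP/negPn; apply: (@rootCN1_rotation_closed n (fun x => x ^+ m != 1)) wn => //.
- by move=> x; rewrite -rmorphXn fmorph_eq1.
- by move=> x; rewrite exprMn exprVn exprAC (prim_expr_order y_prim) expr1n invr1 mulr1.
- by rewrite negbK (prim_expr_order y_prim).
Qed.

Lemma prod_1_sub_prim_root (F : fieldType) n (mu : F) : n.-primitive_root mu ->
  \prod_(1 <= k < n) (1 - mu ^+ k) = n%:R.
Proof.
move=> mu_prim; have n_gt0 := prim_order_gt0 mu_prim.
have := factor_Xn_sub_1 mu_prim; rewrite big_ltn // expr0 polyC1 subrX1.
have XsubC1_neq0 : ('X - 1 : {poly F}) != 0 by rewrite -polyC1 polyXsubC_eq0.
move/(mulfI XsubC1_neq0)/(congr1 (horner^~ 1)).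
rewrite horner_prod horner_sum; under eq_bigr do rewrite hornerXsubC.
by move=> ->; under eq_bigr do rewrite hornerXn expr1n; rewrite sumr_const card_ord.
Qed.

Lemma sqr_cyclotomic_unit (R : comNzRingType) (z : R) r k : (k <= r)%N ->
  z ^+ (2 * r) = -1 ->
  (1 - z ^+ (2 * (r - k))) * (1 - z ^+ (2 * (k + r))) = (z ^+ k - z ^+ (2 * r - k)) ^+ 2.
Proof.
move=> le_kr; set a := z ^+ k; set b := z ^+ (r - k).
have zE m i j : (m = i * k + j * (r - k))%N -> z ^+ m = a ^+ i * b ^+ j.
  by move=> ->; rewrite exprD (mulnC i) (mulnC j) !exprM.
rewrite (zE (2 * r) 2 2)%N; last lia.
rewrite (zE (2 * (r - k)) 0 2)%N ?(zE (2 * (k + r)) 4 2)%N ?(zE (2 * r - k) 1 2)%N; try lia.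
move=> ab_sqr; apply/eqP; rewrite -subr_eq0.
have -> : (1 - a ^+ 0 * b ^+ 2) * (1 - a ^+ 4 * b ^+ 2) - (a - a ^+ 1 * b ^+ 2) ^+ 2 =
    (a ^+ 2 * b ^+ 2 + 1) * (a ^+ 2 * b ^+ 2 + 1 - a ^+ 2 - b ^+ 2) by ring.
by rewrite ab_sqr addNr mul0r.
Qed.

(* For [z = exp (i pi / 2r)], [z^k - z^(2r-k) = 2 cos (k pi / 2r)]; the factors
   [k] and [2r - k] of [prod_(1 <= k < 2r) (1 - z^(2k)) = 2r] pair up into squares. *)
Lemma sqr_prod_cyclotomic_units (F : fieldType) r (z : F) : (0 < r)%N ->
    (4 * r).-primitive_root z ->
  (\prod_(1 <= k < r) (z ^+ k - z ^+ (2 * r - k))) ^+ 2 = r%:R.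
Proof.
move=> r_gt0 z_prim.
have z2r : z ^+ (2 * r) = -1.
  have /eqP : (z ^+ (2 * r)) ^+ 2 = 1.
    by rewrite -exprM -(prim_expr_order z_prim); congr (z ^+ _); lia.
  rewrite sqrf_eq1 -(prim_order_dvd z_prim) => /orP[|/eqP //].
  by move/(dvdn_leq (_ : 0 < 2 * r)%N); lia.
have mu_prim : (2 * r).-primitive_root (z ^+ 2).
  have := dvdn_prim_root z_prim (dvdn_mul (isT : (2 %| 4)%N) (dvdnn r)).
  by rewrite (_ : 4 * r = 2 * (2 * r))%N ?mulnK //; lia.
have := prod_1_sub_prim_root mu_prim.
rewrite (@big_cat_nat _ _ _ r 1 (2 * r)) /=; [|lia|lia].
rewrite (@big_ltn _ _ _ r (2 * r)); last lia.
rewrite -(add1n r) big_addn (_ : 2 * r - r = r)%N; last lia.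
rewrite -exprM z2r opprK mulrCA big_nat_rev -big_split /= natrM -prodrXl.
under eq_big_nat => k /andP[_ lt_kr] do
  rewrite -!exprM add1n subSS sqr_cyclotomic_unit ?(ltnW lt_kr) //.
have two_neq0 : 2 != 0 :> F.
  by apply: (prim_root_dvd_eq0 z_prim); rewrite (dvdn_mulr _ (isT : (2 %| 4)%N)).
exact: mulfI.
Qed.

Lemma natr_2r_neq0 r : (0 < r)%N -> (2 * r)%:R != 0 :> algC.
Proof. by move=> r_gt0; rewrite pnatr_eq0 muln_eq0 negb_or -!lt0n r_gt0. Qed.

Lemma horner_map_intrD (R : comNzRingType) (A B : {poly int}) (z : R) :
  (map_poly intr (A + B)).[z] = (map_poly intr A).[z] + (map_poly intr B).[z].
Proof. by rewrite rmorphD hornerD. Qed.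

Lemma horner_map_intrM (R : comNzRingType) (A B : {poly int}) (z : R) :
  (map_poly intr (A * B)).[z] = (map_poly intr A).[z] * (map_poly intr B).[z].
Proof. by rewrite rmorphM hornerM. Qed.

Lemma horner_map_intrC (R : comNzRingType) (a : int) (z : R) :
  (map_poly intr a%:P).[z] = a%:~R.
Proof. by rewrite map_polyC hornerC. Qed.

Section RingRr.
Variable r : nat.
Local Notation Rr := (in_Rr r).

Lemma in_Rr_int (k : int) : Rr k%:~R.
Proof. by exists 0%N, k%:P; rewrite expr0 mulr1 horner_map_intrC. Qed.

Lemma in_Rr_nat k : Rr k%:R.
Proof. by have := in_Rr_int k; rewrite -pmulrn. Qed.

Lemma in_Rr1 : Rr 1. Proof. exact: (in_Rr_nat 1). Qed.

Lemma in_Rr_xi : Rr (xi r).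
Proof. by exists 0%N, 'X; rewrite expr0 mulr1 map_polyX hornerX. Qed.

Lemma in_RrD x y : Rr x -> Rr y -> Rr (x + y).
Proof.
move=> [k [A Ax]] [l [B By]].
exists (k + l)%N, (A * ((2 * r)%:Z ^+ l)%:P + B * ((2 * r)%:Z ^+ k)%:P).
rewrite horner_map_intrD !horner_map_intrM !horner_map_intrC -Ax -By.
by rewrite !rmorphXn /= -pmulrn exprD; ring.
Qed.

Lemma in_RrM x y : Rr x -> Rr y -> Rr (x * y).
Proof.
move=> [k [A Ax]] [l [B By]].
by exists (k + l)%N, (A * B); rewrite horner_map_intrM -Ax -By exprD; ring.
Qed.

Lemma in_RrN x : Rr x -> Rr (- x).
Proof. by rewrite -mulN1r; apply: in_RrM; apply: (in_Rr_int (-1)). Qed.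

Lemma in_RrB x y : Rr x -> Rr y -> Rr (x - y).
Proof. by move=> Rx /in_RrN; apply: in_RrD. Qed.

Lemma in_RrX x k : Rr x -> Rr (x ^+ k).
Proof. by move=> Rx; elim: k => [|k IHk]; [apply: in_Rr1 | rewrite exprS; apply: in_RrM]. Qed.

Lemma in_Rr_prod (I : Type) (s : seq I) (F : I -> algC) :
  (forall i, Rr (F i)) -> Rr (\prod_(i <- s) F i).
Proof. by move=> RF; apply: (big_ind Rr in_Rr1 in_RrM). Qed.

Lemma in_Rr_sum (I : Type) (s : seq I) (F : I -> algC) :
  (forall i, Rr (F i)) -> Rr (\sum_(i <- s) F i).
Proof. by move=> RF; apply: (big_ind Rr (in_Rr_nat 0) in_RrD). Qed.

Lemma in_RrV2r : (0 < r)%N -> Rr (2 * r)%:R^-1.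
Proof.
by move=> r_gt0; exists 1%N, 1; rewrite expr1 mulVf ?rmorph1 ?hornerC ?natr_2r_neq0.
Qed.

Lemma in_Rr_invN2rX k : (0 < r)%N -> Rr ((- (2 * r)%:R) ^+ k)^-1.
Proof. by move=> r_gt0; rewrite -exprVn invrN; apply/in_RrX/in_RrN/in_RrV2r. Qed.

Lemma in_Rr_sqrtC x y : Rr y -> y ^+ 2 = x -> Rr (sqrtC x).
Proof.
move=> Ry yx; have /eqP : (sqrtC x - y) * (sqrtC x + y) = 0.
  by rewrite -subr_sqr sqrtCK yx subrr.
by rewrite mulf_eq0 subr_eq0 addr_eq0 => /orP[] /eqP ->; last apply: in_RrN.
Qed.

Variable p : nat.

Lemma congr_Rr_refl x : congr_Rr r p x x.
Proof. by exists 0; split; [apply: (in_Rr_nat 0) | rewrite subrr mulr0]. Qed.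

Lemma congr_Rr_eq x y : x = y -> congr_Rr r p x y.
Proof. by move=> ->; apply: congr_Rr_refl. Qed.

Lemma congr_Rr_sym x y : congr_Rr r p x y -> congr_Rr r p y x.
Proof.
by case=> z [Rz xy]; exists (- z); split; [apply: in_RrN | rewrite mulrN -xy opprB].
Qed.

Lemma congr_Rr_trans x y w :
  congr_Rr r p x y -> congr_Rr r p y w -> congr_Rr r p x w.
Proof.
case=> z [Rz xy] [z' [Rz' yw]]; exists (z + z'); split; first exact: in_RrD.
by rewrite mulrDr -xy -yw; ring.
Qed.

Lemma congr_RrD x y u v :
  congr_Rr r p x y -> congr_Rr r p u v -> congr_Rr r p (x + u) (y + v).
Proof.
case=> z [Rz xy] [z' [Rz' uv]]; exists (z + z'); split; first exact: in_RrD.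
by rewrite mulrDr -xy -uv; ring.
Qed.

Lemma congr_RrN x y : congr_Rr r p x y -> congr_Rr r p (- x) (- y).
Proof.
case=> z [Rz xy]; exists (- z); split; first exact: in_RrN.
by rewrite mulrN -xy opprB opprK addrC.
Qed.

Lemma congr_RrMr x y u : congr_Rr r p x y -> Rr u -> congr_Rr r p (x * u) (y * u).
Proof.
case=> z [Rz xy] Ru; exists (z * u); split; first exact: in_RrM.
by rewrite mulrA -xy mulrBl.
Qed.

Lemma congr_RrM x y u v : congr_Rr r p x y -> congr_Rr r p u v -> Rr u -> Rr y ->
  congr_Rr r p (x * u) (y * v).
Proof.
move=> xy uv Ru Ry; apply: congr_Rr_trans (congr_RrMr xy Ru) _.
by rewrite ![y * _]mulrC; apply: congr_RrMr.
Qed.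

Lemma congr_RrX x y k : congr_Rr r p x y -> Rr x -> Rr y ->
  congr_Rr r p (x ^+ k) (y ^+ k).
Proof.
move=> xy Rx Ry; elim: k => [|k IHk]; first exact: congr_Rr_refl.
by rewrite !exprS; apply: congr_RrM => //; apply: in_RrX.
Qed.

Lemma congr_Rr_int (a b : int) : (p%:Z %| a - b)%Z -> congr_Rr r p a%:~R b%:~R.
Proof.
case/dvdzP=> k ab; exists k%:~R; split; first exact: in_Rr_int.
by rewrite -rmorphB /= ab rmorphM /= mulrC -pmulrn.
Qed.

Lemma congr_Rr_invr x e : congr_Rr r p x e -> e ^+ 2 = 1 -> x != 0 ->
  Rr x^-1 -> Rr e -> congr_Rr r p x^-1 e.
Proof.
case=> z [Rz xe] e_sqr x_neq0 RxV Re; exists (- (x^-1 * e * z)); split.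
  by apply/in_RrN/in_RrM => //; apply: in_RrM.
rewrite mulrN mulrCA -xe.
have -> : x^-1 * e * (x - e) = e * (x^-1 * x) - x^-1 * e ^+ 2 by ring.
by rewrite mulVf // e_sqr !mulr1 opprB.
Qed.

Hypothesis p_prime : prime p.

Lemma congr_Rr_frobenius x y : Rr x -> Rr y ->
  congr_Rr r p ((x + y) ^+ p) (x ^+ p + y ^+ p).
Proof.
move=> Rx Ry; have /prednK p_def := prime_gt0 p_prime.
rewrite exprDn -p_def big_ord_recl big_ord_recr /= subn0 subnn !bin0 binn !mulr1n.
rewrite expr0 mul1r mulr1 p_def (_ : bump 0 p.-1 = p) 1?addrCA; last by rewrite /bump add1n.
pose G (i : 'I_p.-1) := x ^+ (p - bump 0 i) * y ^+ bump 0 i *+ ('C(p, bump 0 i) %/ p).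
exists (\sum_(i < p.-1) G i); split.
  apply: in_Rr_sum => i; rewrite /G -mulr_natr; apply: in_RrM; last exact: in_Rr_nat.
  by apply: in_RrM; apply: in_RrX.
rewrite addrK mulr_sumr; apply: eq_bigr => i _; rewrite /G mulr_natl -mulrnA.
have i_lt : (0 < bump 0 i < p)%N by move: (ltn_ord i); rewrite /bump; lia.
by rewrite divnK ?prime_dvd_bin.
Qed.

Variable s : nat.
Local Notation N := (p ^ s)%N.

Lemma congr_Rr_frobeniusX x y : Rr x -> Rr y ->
  congr_Rr r p ((x + y) ^+ N) (x ^+ N + y ^+ N).
Proof.
move=> Rx Ry; elim: s => [|k IHk]; first by rewrite !expr1; apply: congr_Rr_refl.
rewrite expnSr !exprM; apply: congr_Rr_trans (congr_Rr_frobenius (in_RrX _ Rx) (in_RrX _ Ry)).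
by apply: congr_RrX IHk _ _; [apply/in_RrX/in_RrD | apply: in_RrD; apply: in_RrX].
Qed.

Lemma congr_Rr_frobeniusXB x y : Rr x -> Rr y ->
  congr_Rr r p ((x - y) ^+ N) (x ^+ N - y ^+ N).
Proof.
move=> Rx Ry; have := congr_Rr_frobeniusX (in_RrB Rx Ry) Ry; rewrite subrK.
move/congr_Rr_sym/congr_RrD => /(_ _ _ (congr_Rr_refl (- y ^+ N))).
by rewrite addrK.
Qed.

Definition frobenius_fixed x := Rr x /\ congr_Rr r p (x ^+ N) x.

Lemma frobenius_fixed1 : frobenius_fixed 1.
Proof. by split; [apply: in_Rr1 | rewrite expr1n; apply: congr_Rr_refl]. Qed.

Lemma frobenius_fixedM x y :
  frobenius_fixed x -> frobenius_fixed y -> frobenius_fixed (x * y).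
Proof.
move=> [Rx xN] [Ry yN]; split; first exact: in_RrM.
by rewrite exprMn; apply: congr_RrM => //; apply: in_RrX.
Qed.

Lemma frobenius_fixedB x y :
  frobenius_fixed x -> frobenius_fixed y -> frobenius_fixed (x - y).
Proof.
move=> [Rx xN] [Ry yN]; split; first exact: in_RrB.
apply: congr_Rr_trans (congr_Rr_frobeniusXB Rx Ry) _.
exact: congr_RrD (congr_RrN _).
Qed.

End RingRr.

Section CyclotomicElementsOfRr.
Variable r : nat.
Hypothesis r_gt0 : (0 < r)%N.
Local Notation Rr := (in_Rr r).

Lemma dvdn_4r_tt : (4 * r %| tt r)%N.
Proof. by rewrite /tt; case: odd; [apply: dvdn_mul | apply: dvdnn]. Qed.

Lemma dvdn_8_tt : (8 %| tt r)%N.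
Proof.
rewrite /tt; case: ifP => [_ | r_even]; first exact: dvdn_mulr.
by rewrite (_ : 8 = 4 * 2)%N // dvdn_pmul2l // dvdn2 r_even.
Qed.

Lemma prim_root_xi : (tt r).-primitive_root (xi r).
Proof.
have tt_even : ~~ odd (tt r) by rewrite /tt; case: (odd r); rewrite oddM.
have tt_half_gt0 : (0 < (tt r)./2)%N by rewrite half_gt0 /tt; case: odd; lia.
by have := prim_rootCN1 tt_half_gt0; rewrite muln2 (even_halfK tt_even).
Qed.

Lemma in_Rr_unity_root z m : (m %| tt r)%N -> z ^+ m = 1 -> Rr z.
Proof.
move=> /dvdnP[k tt_def] zm; have /(prim_rootP prim_root_xi)[i ->] : z ^+ tt r = 1.
  by rewrite tt_def mulnC exprM zm expr1n.
exact/in_RrX/in_Rr_xi.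
Qed.

Lemma in_Rr_unity_rootV z m : (m %| tt r)%N -> z ^+ m = 1 -> Rr z^-1.
Proof. by move=> m_dvd zm; apply: (in_Rr_unity_root m_dvd); rewrite exprVn zm invr1. Qed.

Lemma lambda_expr_2r : lambda r ^+ (2 * r) = 1.
Proof. by rewrite mulnC exprM rootCK // sqrrN expr1n. Qed.

Lemma dvdn_2r_tt : (2 * r %| tt r)%N.
Proof. by apply: dvdn_trans dvdn_4r_tt; rewrite (_ : 4 = 2 * 2)%N // -mulnA dvdn_mull. Qed.

Lemma in_Rr_lambda : Rr (lambda r).
Proof. exact: in_Rr_unity_root dvdn_2r_tt lambda_expr_2r. Qed.

Lemma in_Rr_lambdaV : Rr (lambda r)^-1.
Proof. exact: in_Rr_unity_rootV dvdn_2r_tt lambda_expr_2r. Qed.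

Lemma in_Rr_i : Rr 'i.
Proof.
apply: (in_Rr_unity_root (dvdn_trans (isT : (4 %| 8)%N) dvdn_8_tt)).
by rewrite (exprM _ 2 2) sqrCi sqrrN expr1n.
Qed.

Lemma in_Rr_prod_cyclotomic n z : (4 * n %| tt r)%N -> (4 * n).-primitive_root z ->
  Rr (\prod_(1 <= k < n) (z ^+ k - z ^+ (2 * n - k))).
Proof.
move=> n_dvd z_prim; have Rz m : Rr (z ^+ m).
  exact/in_RrX/(in_Rr_unity_root n_dvd)/prim_expr_order.
by apply: in_Rr_prod => k; apply: in_RrB.
Qed.

Lemma in_Rr_sqrt2r : Rr (sqrtC (2 * r)%:R).
Proof.
have [z z_prim] : {z : algC | (4 * r).-primitive_root z}.
  by apply: C_prim_root_exists; lia.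
have [w w_prim] := C_prim_root_exists (isT : (0 < 4 * 2)%N).
apply: (in_Rr_sqrtC (in_RrM (in_Rr_prod_cyclotomic (n := 2) dvdn_8_tt w_prim)
                             (in_Rr_prod_cyclotomic dvdn_4r_tt z_prim))).
by rewrite exprMn !sqr_prod_cyclotomic_units // natrM.
Qed.

Lemma in_Rr_sqrt2rV : Rr (sqrtC (2 * r)%:R)^-1.
Proof.
have n_neq0 := natr_2r_neq0 r_gt0.
have sqrt_neq0 : sqrtC (2 * r)%:R != 0 :> algC by rewrite sqrtC_eq0.
have -> : (sqrtC (2 * r)%:R)^-1 = sqrtC (2 * r)%:R * (2 * r)%:R^-1 :> algC.
  by apply: (mulfI sqrt_neq0); rewrite mulrA -expr2 sqrtCK !mulfV.
exact: in_RrM in_Rr_sqrt2r (in_RrV2r r_gt0).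
Qed.

Lemma in_Rr_eta : Rr (eta r).
Proof.
apply: in_RrM in_Rr_sqrt2rV; apply: in_RrM; first exact/in_RrN/in_Rr_i.
exact: in_RrB in_Rr_lambda in_Rr_lambdaV.
Qed.

End CyclotomicElementsOfRr.

Section EulerCriterion.
Variable F : finFieldType.

Lemma finfield_fermat (x : F) : x != 0 -> x ^+ #|F|.-1 = 1.
Proof.
move=> x_neq0; apply: (mulIf x_neq0); rewrite mul1r -exprSr prednK ?expf_card //.
by apply/card_gt0P; exists 0.
Qed.

Lemma finfield_prim_root : exists g : F, #|F|.-1.-primitive_root g.
Proof.
have : has #|F|.-1.-primitive_root (enum (predC1 (0 : F))).
  apply: has_prim_root; rewrite ?enum_uniq -?cardE ?cardC1 //.
    by rewrite -(cardC1 (0 : F)); apply/card_gt0P; exists 1; rewrite !inE oner_neq0.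
  by apply/allP => x; rewrite mem_enum unity_rootE => /finfield_fermat ->.
by case/hasP=> g _ g_prim; exists g.
Qed.

Lemma finfield_euler_criterion (a : F) : odd #|F| -> a != 0 ->
  a ^+ #|F|./2 = if [exists x, x ^+ 2 == a] then 1 else -1.
Proof.
move=> F_odd a_neq0; have half2 : (#|F|./2 * 2 = #|F|.-1)%N by rewrite muln2 odd_halfK.
case: existsP => [[x /eqP a_def] | no_sqrt].
  rewrite -a_def -exprM mulnC half2 finfield_fermat //.
  by apply: contraNneq a_neq0 => x0; rewrite -a_def x0 expr0n.
have /eqP : (a ^+ #|F|./2) ^+ 2 = 1 by rewrite -exprM half2 finfield_fermat.
rewrite sqrf_eq1 => /orP[/eqP ah1 | /eqP //]; case: no_sqrt.
have [g g_prim] := finfield_prim_root.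
have half_gt0 : (0 < #|F|./2)%N by have := prim_order_gt0 g_prim; lia.
have [[k _] /= a_def] := prim_rootP g_prim (finfield_fermat a_neq0).
have : (#|F|.-1 %| #|F|./2 * k)%N by rewrite (prim_order_dvd g_prim) mulnC exprM -a_def ah1.
rewrite -half2 dvdn_pmul2l // => /dvdnP[m k_def].
by exists (g ^+ m); rewrite a_def k_def -exprM.
Qed.

End EulerCriterion.

Lemma legendre_sqr (a : int) p : ~~ (p%:Z %| a)%Z -> legendre a p ^+ 2 = 1.
Proof. by rewrite /legendre => /negbTE ->; case: ifP; rewrite ?sqrrN expr1n. Qed.

Section LegendreSymbol.
Variable p : nat.
Hypotheses (p_prime : prime p) (p_odd : odd p).

Lemma dvdz_Fp (n : int) : (p%:Z %| n)%Z = (n%:~R == 0 :> 'F_p).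
Proof. exact: dvdz_pcharf (pchar_Fp p_prime) n. Qed.

Lemma legendre_Fp (a : int) : ~~ (p%:Z %| a)%Z ->
  (legendre a p)%:~R = if [exists x : 'F_p, x ^+ 2 == a%:~R] then 1 else -1 :> 'F_p.
Proof.
rewrite /legendre => /negbTE ->.
have -> : [exists x : 'I_p, (p%:Z %| x%:Z ^+ 2 - a)%Z] = [exists x : 'F_p, x ^+ 2 == a%:~R].
  apply/existsP/existsP => [[x] | [y]].
    by rewrite dvdz_Fp rmorphB rmorphXn /= subr_eq0; exists x%:R; rewrite pmulrn.
  have y_lt_p : (val y < p)%N by rewrite -[X in (_ < X)%N](Fp_cast p_prime) ltn_ord.
  by exists (Ordinal y_lt_p); rewrite dvdz_Fp rmorphB rmorphXn /= subr_eq0 -pmulrn natr_Zp.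
by case: ifP; rewrite ?rmorphN1 ?rmorph1.
Qed.

Lemma euler_criterion_Fp (a : int) : ~~ (p%:Z %| a)%Z ->
  (a%:~R : 'F_p) ^+ p./2 = (legendre a p)%:~R.
Proof.
move=> p_ndvd_a; rewrite legendre_Fp //.
have cardF : #|'F_p| = p := card_Fp p_prime.
rewrite -[in p./2]cardF; apply: finfield_euler_criterion; first by rewrite cardF.
by rewrite -dvdz_Fp.
Qed.

Lemma Fp_frobenius (x : 'F_p) : x ^+ p = x.
Proof. by rewrite -[in X in _ ^+ X](card_Fp p_prime) expf_card. Qed.

Lemma euler_criterion_expn (a : int) s : ~~ (p%:Z %| a)%Z ->
  (p%:Z %| a ^+ (p ^ s)./2 - legendre a p ^+ s)%Z.
Proof.
move=> p_ndvd_a; rewrite dvdz_Fp rmorphB !rmorphXn /= subr_eq0; apply/eqP.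
elim: s => [|s IHs]; first by rewrite expn0 !expr0.
have half_expnS : ((p ^ s.+1)./2 = (p ^ s)./2 * p + p./2)%N.
  have /odd_halfK : odd (p ^ s) by rewrite oddX p_odd orbT.
  have /odd_halfK : odd (p ^ s.+1) by rewrite oddX p_odd orbT.
  have /odd_halfK := p_odd; rewrite expnS -!muln2; nia.
by rewrite half_expnS exprD exprM IHs Fp_frobenius euler_criterion_Fp // -exprSr.
Qed.
End LegendreSymbol.

Lemma dvdn_mul2_even d m : ~~ odd m -> (d * 2 %| m)%N = (d %| m./2)%N.
Proof. by move=> m_even; rewrite -{1}(even_halfK m_even) -muln2 dvdn_pmul2r. Qed.

Lemma Delta_rec r i : Delta r i.+2 = Delta r 1 * Delta r i.+1 - Delta r i.
Proof. by rewrite /Delta /=; case: (Delta_pair r i). Qed.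

Lemma congr_V_coord r p (u v : Vvec r) : (0 < p)%N ->
  (forall i, congr_Rr r p (u i) (v i)) -> congr_V p u v.
Proof.
move=> p_gt0 uv; have p_neq0 : p%:R != 0 :> algC by rewrite pnatr_eq0 -lt0n.
exists [ffun i => (u i - v i) / p%:R]; split=> [i | i]; rewrite ffunE; last first.
  by rewrite mulrC divfK.
by have [z [Rz ->]] := uv i; rewrite mulrC mulKf.
Qed.

Section Proposition3.
Variables (p s r : nat) (plus : bool).
Hypotheses (p_prime : prime p) (p_odd : odd p) (s_gt0 : (0 < s)%N) (r_gt0 : (0 < r)%N).
Hypothesis r_dvd : (r %| if plus then (p ^ s + 1)./2 else (p ^ s - 1)./2)%N.
Local Notation N := (p ^ s)%N.
Local Notation Rr := (in_Rr r).
Local Notation sign := (if plus then -1 else 1 : algC).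
Local Notation K := (((- (2 * r)%:R) ^+ N./2)^-1 : algC).
Local Notation L := (legendre (- (2 * r)%:Z) p).

Lemma odd_N : odd N.
Proof. by rewrite oddX p_odd orbT. Qed.

Lemma N_half : N = (N./2 * 2).+1.
Proof. by rewrite muln2 odd_halfK ?prednK ?expn_gt0 ?prime_gt0 ?odd_N. Qed.

Lemma exprN_N (x : algC) : (- x) ^+ N = - x ^+ N.
Proof. by rewrite exprNn -signr_odd odd_N expr1 mulN1r. Qed.

Lemma dvdn_2r_N : (2 * r %| if plus then N + 1 else N - 1)%N.
Proof.
rewrite mulnC dvdn_mul2_even; first by case: plus r_dvd.
by case: plus; rewrite N_half ?addn1 ?subn1 /= ?negbK oddM andbF.
Qed.

Lemma lambda_expN : lambda r ^+ N = if plus then (lambda r)^-1 else lambda r.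
Proof.
have lambda_neq0 : lambda r != 0.
  apply/eqP => lambda0; have := lambda_expr_2r r_gt0.
  by rewrite lambda0 expr0n gtn_eqF ?muln_gt0 // => /eqP; rewrite eq_sym oner_eq0.
have /dvdnP[k] := dvdn_2r_N.
have lambda_unit : lambda r ^+ (k * (2 * r)) = 1.
  by rewrite mulnC exprM (lambda_expr_2r r_gt0) expr1n.
case: plus => N_def.
  by apply: (mulIf lambda_neq0); rewrite mulVf // -exprSr -addn1 N_def lambda_unit.
have N_pred : (N - 1 = N./2 * 2)%N by rewrite {1}N_half subn1.
by rewrite {1}N_half exprS -N_pred N_def lambda_unit mulr1.
Qed.

Lemma congr_lambda_sub_inv_expN :
  congr_Rr r p ((lambda r - (lambda r)^-1) ^+ N) (sign * (lambda r - (lambda r)^-1)).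
Proof.
have Rlambda := in_Rr_lambda r_gt0; have RlambdaV := in_Rr_lambdaV r_gt0.
apply: congr_Rr_trans (congr_Rr_frobeniusXB p_prime s Rlambda RlambdaV) _.
by apply: congr_Rr_eq; rewrite exprVn lambda_expN; case: plus; rewrite ?invrK; ring.
Qed.

Lemma frobenius_fixed_Delta1 : frobenius_fixed r p s (Delta r 1).
Proof.
have Rlambda := in_Rr_lambda r_gt0; have RlambdaV := in_Rr_lambdaV r_gt0.
split; first exact: in_RrB (in_RrN Rlambda) RlambdaV.
apply: congr_Rr_trans (congr_Rr_frobeniusXB p_prime s (in_RrN Rlambda) RlambdaV) _.
by apply: congr_Rr_eq; rewrite exprN_N exprVn lambda_expN; case: plus; rewrite ?invrK // addrC.
Qed.

Lemma frobenius_fixed_Delta i : frobenius_fixed r p s (Delta r i).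
Proof.
suff [] : frobenius_fixed r p s (Delta r i) /\ frobenius_fixed r p s (Delta r i.+1) by [].
elim: i => [|i [Di Di1]].
  by split; [apply: frobenius_fixed1 | apply: frobenius_fixed_Delta1].
split=> //; rewrite Delta_rec.
by apply: frobenius_fixedB => //; apply: frobenius_fixedM => //; apply: frobenius_fixed_Delta1.
Qed.

Lemma congr_eta_expN : congr_Rr r p (eta r ^+ N) (sign * K * eta r).
Proof.
pose l := lambda r - (lambda r)^-1; pose q : algC := sqrtC (2 * r)%:R.
have expN (x : algC) : x ^+ N = x * (x ^+ 2) ^+ N./2 by rewrite {1}N_half exprS mulnC exprM.
have Ru : Rr (K * - 'i / q).
  apply: in_RrM (in_Rr_sqrt2rV r_gt0).
  exact: in_RrM (in_Rr_invN2rX _ r_gt0) (in_RrN (in_Rr_i r_gt0)).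
have := congr_RrMr congr_lambda_sub_inv_expN Ru.
have -> : sign * K * eta r = sign * l * (K * - 'i / q) by rewrite /eta -/l -/q; ring.
suff -> : eta r ^+ N = l ^+ N * (K * - 'i / q) by [].
rewrite /eta -/l -/q !exprMn (expN (- 'i)) (expN q^-1) sqrrN sqrCi exprVn sqrtCK.
by rewrite -exprVn invrN [in RHS]exprNn; ring.
Qed.

Lemma prime_ndvd_2r : ~~ (p %| 2 * r)%N.
Proof.
apply/negP => /dvdn_trans/(_ dvdn_2r_N) p_dvd.
have p_dvd_N : (p %| N)%N by rewrite dvdn_exp.
have : (p %| 1)%N.
  case: plus p_dvd => [|p_dvd_pred]; first by rewrite (dvdn_addr _ p_dvd_N).
  by have := dvdn_sub p_dvd_N p_dvd_pred; rewrite subKn // expn_gt0 prime_gt0.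
by rewrite dvdn1 => /eqP p1; move: p_prime; rewrite p1.
Qed.

Lemma congr_legendre : congr_Rr r p K (L ^+ s)%:~R.
Proof.
have p_ndvd : ~~ (p%:Z %| - (2 * r)%:Z)%Z by rewrite dvdzE abszN prime_ndvd_2r.
have := congr_Rr_int r (euler_criterion_expn p_prime p_odd s p_ndvd).
rewrite rmorphXn rmorphN /= -pmulrn => euler.
apply: congr_Rr_invr => //.
- by rewrite -rmorphXn /= exprAC legendre_sqr // expr1n rmorph1.
- by rewrite expf_neq0 // oppr_eq0 natr_2r_neq0.
- exact: in_Rr_invN2rX.
- exact: in_Rr_int.
Qed.

Lemma congr_eta_Delta_expN i :
  congr_Rr r p ((eta r * Delta r i) ^+ N) (sign * (L ^+ s)%:~R * eta r * Delta r i).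
Proof.
have [RDelta DeltaN] := frobenius_fixed_Delta i.
have Rsign : Rr sign by case: plus; [apply/in_RrN | ]; apply: in_Rr1.
have Rv : Rr (sign * eta r * Delta r i).
  by apply: in_RrM RDelta; apply: in_RrM (in_Rr_eta r_gt0).
rewrite exprMn; apply: congr_Rr_trans (congr_RrM congr_eta_expN DeltaN (in_RrX _ RDelta) _) _.
  exact: in_RrM (in_RrM Rsign (in_Rr_invN2rX _ r_gt0)) (in_Rr_eta r_gt0).
set v := sign * eta r * Delta r i.
have -> : sign * K * eta r * Delta r i = K * v by rewrite /v; ring.
have -> : sign * (L ^+ s)%:~R * eta r * Delta r i = (L ^+ s)%:~R * v by rewrite /v; ring.
exact: congr_RrMr congr_legendre Rv.
Qed.

End Proposition3.

Theorem proposition3 (p s r : nat) (plus : bool) :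
  prime p -> odd p -> (1 <= s)%N -> (3 <= r)%N ->
  (r %| (if plus then (p ^ s + 1)./2 else (p ^ s - 1)./2))%N ->
  @congr_V r p (omega_tilde r p s)
    (eta_Delta_vec r
       ((- (if plus then 1 else -1) * (legendre (- (2 * r)%:Z) p) ^+ s)%:~R)).
Proof.
move=> p_prime p_odd s_gt0 r_ge3 r_dvd.
have r_gt0 : (0 < r)%N by apply: leq_trans r_ge3.
apply: congr_V_coord (prime_gt0 p_prime) _ => i; rewrite !ffunE.
have -> : (- (if plus then 1 else -1) * legendre (- (2 * r)%:Z) p ^+ s)%:~R =
    (if plus then -1 else 1) * (legendre (- (2 * r)%:Z) p ^+ s)%:~R :> algC.
  by case: (plus); rewrite ?opprK ?mulN1r ?mul1r ?rmorphN.
exact: congr_eta_Delta_expN.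
Qed.
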